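(* There exist a polynomial $p$ and a constant $c>0$ such that for every integer $k\geq 1$ there exist an approval election $E=(N,C,(A_v)_{v\in N},k)$ with $|N|\le p(k)$ voters, a committee $W_0\subseteq C$ with $|W_0|=k$, and a valid sequence of swaps $(a_1,b_1),\dots,(a_s,b_s)$ starting from $W_0$ with $s\ge c\,k^2$ (i.e., of length $\Omega(k^2)$) such that every swap in the sequence increases the PAV score by at least $\frac{n}{k^2}$, where $n=|N|$; that is, $\Delta(W_{t-1},a_t,b_t)\ge \frac{n}{k^2}$ for all $t\in[s]$.
   Context: An approval election is a tuple $E=(N,C,(A_v)_{v\in N},k)$ where $N=[n]$ is a set of voters, $C$ is a finite set of candidates, $A_v\subseteq C$ is the approval ballot of voter $v$, and $k\in[|C|]$ is the target committee size. A committee is a subset of $C$. The PAV score of a committee $W$ is $\textsc{pavsc}(W)=\sum_{v\in N}\sum_{j=1}^{|A_v\cap W|}\frac{1}{j}$. For $a\in W$, $b\notin W$, let $\Delta(W,a,b)=\textsc{pavsc}((W\setminus\{a\})\cup\{b\})-\textsc{pavsc}(W)$. A sequence of swaps $(a_1,b_1),\dots,(a_s,b_s)$ is valid starting from $W_0$ if, setting $W_t=(W_{t-1}\cup\{b_t\})\setminus\{a_t\}$, we have $a_t\in W_{t-1}$ and $b_t\notin W_{t-1}$ for every $t\in[s]$. *)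

From mathcomp Require Import all_boot all_order all_algebra.
Set Implicit Arguments. Unset Strict Implicit. Unset Printing Implicit Defensive.
Import Order.TTheory GRing.Theory Num.Theory.
Local Open Scope ring_scope.

Definition pavsc (n m : nat) (A : 'I_n -> {set 'I_m}) (W : {set 'I_m}) : rat :=
  \sum_(v < n) \sum_(1 <= j < #|A v :&: W|.+1) (j%:R)^-1.

Definition swap (m : nat) (W : {set 'I_m}) (a b : 'I_m) : {set 'I_m} :=
  (W :|: [set b]) :\ a.

Definition Delta (n m : nat) (A : 'I_n -> {set 'I_m}) (W : {set 'I_m}) (a b : 'I_m) : rat :=
  pavsc A ((W :\ a) :|: [set b]) - pavsc A W.

Fixpoint valid_swaps (m : nat) (W : {set 'I_m}) (s : seq ('I_m * 'I_m)) : bool :=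
  match s with
  | [::] => true
  | (a, b) :: s' => [&& a \in W, b \notin W & valid_swaps (swap W a b) s']
  end.

Fixpoint all_swaps_gain (n m : nat) (A : 'I_n -> {set 'I_m}) (thr : rat)
    (W : {set 'I_m}) (s : seq ('I_m * 'I_m)) : bool :=
  match s with
  | [::] => true
  | (a, b) :: s' => (thr <= Delta A W a b) && all_swaps_gain A thr (swap W a b) s'
  end.

(* Give every voter a single approved candidate and make candidate x approved
   by exactly x voters.  Then PAV is additive, and swapping x out for x + 1
   gains exactly 1 >= n / k^2 as long as n <= k^2, i.e. with about 5k/4
   candidates.  A committee that is a window of k + 1 consecutive candidates
   with one hole can move its hole from the top of the window to the bottom
   by k such swaps, which slides the window one step up.  Sliding it k/4
   times yields about k^2/4 improving swaps. *)

From mathcomp Require Import all_boot all_order all_algebra.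
From mathcomp Require Import zify ring lra.
Set Implicit Arguments. Unset Strict Implicit. Unset Printing Implicit Defensive.
Import Order.TTheory GRing.Theory Num.Theory.
Local Open Scope ring_scope.

Definition approvals (n m : nat) (A : 'I_n -> {set 'I_m}) (x : 'I_m) : nat :=
  #|[set v | x \in A v]|.

Lemma harmonic_le1 (c : nat) : (c <= 1)%N ->
  \sum_(1 <= j < c.+1) (j%:R : rat)^-1 = c%:R.
Proof. by case: c => [|[|//]] _; [rewrite big_geq|rewrite big_nat1 invr1]. Qed.

Lemma card_interval (N lo hi : nat) : (hi <= N)%N ->
  #|[set i : 'I_N | (lo <= i < hi)%N]| = (hi - lo)%N.
Proof.
move=> le_hiN; rewrite -sum1dep_card.
rewrite -[(hi - lo)%N]muln1 -sum_nat_const_nat (big_nat_widenl _ 0) // big_mkord.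
by rewrite (big_ord_widen_cond _ _ (fun=> 1%N) le_hiN); apply: eq_bigl.
Qed.

Section UnitBallots.

Variables (n m : nat) (A : 'I_n -> {set 'I_m}).
Hypothesis unit_ballots : forall v, (#|A v| <= 1)%N.

Lemma pavsc_unit_ballots (W : {set 'I_m}) :
  pavsc A W = (\sum_(x in W) approvals A x)%:R.
Proof.
have pav_v v : \sum_(1 <= j < #|A v :&: W|.+1) (j%:R : rat)^-1 = #|A v :&: W|%:R.
  by rewrite harmonic_le1 // (leq_trans _ (unit_ballots v)) ?subset_leq_card ?subsetIl.
rewrite /pavsc (eq_bigr _ (fun v _ => pav_v v)) -natr_sum; congr _%:R.
under eq_bigr do rewrite -sum1_card.
rewrite (exchange_big_dep (fun x => x \in W)) => [|v x _]; last by rewrite inE => /andP[].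
apply: eq_bigr => x xW; rewrite /approvals -sum1dep_card.
by apply: eq_bigl => v; rewrite !inE xW andbT.
Qed.

Lemma Delta_unit_ballots (W : {set 'I_m}) (a b : 'I_m) : a \in W -> b \notin W ->
  Delta A W a b = (approvals A b)%:R - (approvals A a)%:R.
Proof.
move=> aW bW; have bWa : b \notin W :\ a by rewrite inE negb_and bW orbT.
rewrite /Delta !pavsc_unit_ballots setUC big_setU1 //.
rewrite (big_setD1 _ aW) !natrD; ring.
Qed.

End UnitBallots.

Section BlockBallots.

Variable w : nat -> nat.

Definition prefix_sum (x : nat) : nat := \sum_(y < x) w y.

Lemma prefix_sumS x : prefix_sum x.+1 = (prefix_sum x + w x)%N.
Proof. exact: big_ord_recr. Qed.

Lemma leq_prefix_sum : {homo prefix_sum : x y / (x <= y)%N}.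
Proof.
apply: homo_leq => // [y x z|i]; first exact: leq_trans.
by rewrite prefix_sumS leq_addr.
Qed.

(* Voters are cut into consecutive blocks, the x-th of size w x, and each
   voter approves only the candidate of its block. *)
Definition block_ballots (n m : nat) (v : 'I_n) : {set 'I_m} :=
  [set x : 'I_m | prefix_sum x <= v < prefix_sum x.+1]%N.

Lemma card_block_ballots n m (v : 'I_n) : (#|block_ballots m v| <= 1)%N.
Proof.
apply/card_le1_eqP => x y; rewrite !inE => /andP[xv vx] /andP[yv vy].
have block_lt (i j : 'I_m) : (i < j)%N -> (v < prefix_sum i.+1)%N ->
  (prefix_sum j <= v)%N -> False.
  by move=> /leq_prefix_sum ij vi jv; move: (leq_ltn_trans jv vi); rewrite ltnNge ij.
case: (ltngtP x y) => [lt_xy|lt_yx|/val_inj //].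
  by case: (block_lt _ _ lt_xy vx yv).
by case: (block_lt _ _ lt_yx vy xv).
Qed.

Lemma approvals_block_ballots n m (x : 'I_m) : (prefix_sum m <= n)%N ->
  approvals (@block_ballots n m) x = w x.
Proof.
move=> le_mn; rewrite /approvals.
have -> : [set v | x \in block_ballots m v] =
          [set v : 'I_n | (prefix_sum x <= v < prefix_sum x.+1)%N].
  by apply: eq_finset => v; rewrite inE.
rewrite card_interval; first by rewrite prefix_sumS addKn.
exact: leq_trans (leq_prefix_sum (ltn_ord x)) le_mn.
Qed.

End BlockBallots.

Definition staircase (m : nat) (v : 'I_'C(m, 2)) : {set 'I_m} :=
  block_ballots id m v.
Arguments staircase : clear implicits.

Lemma approvals_staircase m (x : 'I_m) : approvals (staircase m) x = x.
Proof.
by apply: approvals_block_ballots; rewrite /prefix_sum -(big_mkord xpredT id) bin2_sum.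
Qed.

Definition improving_swaps (n m : nat) (A : 'I_n -> {set 'I_m}) (thr : rat)
    (W : {set 'I_m}) (s : seq ('I_m * 'I_m)) : bool :=
  valid_swaps W s && all_swaps_gain A thr W s.

Lemma improving_swaps_cons n m (A : 'I_n -> {set 'I_m}) thr W a b s :
  improving_swaps A thr W ((a, b) :: s) =
  [&& a \in W, b \notin W, thr <= Delta A W a b &
      improving_swaps A thr (swap W a b) s].
Proof.
rewrite /improving_swaps /=.
by case: (a \in W) (b \notin W) (thr <= _) => [] [] []; rewrite //= andbF.
Qed.

Section SlidingWindow.

Variables (m k : nat) (thr : rat).
Hypothesis thr_le1 : thr <= 1.

Let A := staircase m.+1.

Definition holey_window (r j : nat) : {set 'I_m.+1} :=
  [set x : 'I_m.+1 | (r <= x < r + j) || (r + j < x <= r + k)]%N.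

Fixpoint hole_walk (r j : nat) : seq ('I_m.+1 * 'I_m.+1) :=
  if j is j'.+1 then (inord (r + j'), inord (r + j)) :: hole_walk r j' else [::].

Fixpoint window_walk (r t : nat) : seq ('I_m.+1 * 'I_m.+1) :=
  if t is t'.+1 then hole_walk r k ++ window_walk r.+1 t' else [::].

Lemma size_window_walk r t : size (window_walk r t) = (t * k)%N.
Proof.
have size_hole_walk r' j : size (hole_walk r' j) = j by elim: j => //= j ->.
by elim: t r => //= t IHt r; rewrite size_cat IHt size_hole_walk mulSn.
Qed.

Lemma hole_walk_cat r j s : (r + k <= m)%N -> (j <= k)%N ->
  improving_swaps A thr (holey_window r j) (hole_walk r j ++ s) =
  improving_swaps A thr (holey_window r 0) s.
Proof.
move=> le_rkm; elim: j => [|j IHj] lt_jk //=.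
set a : 'I_m.+1 := inord (r + j); set b : 'I_m.+1 := inord (r + j.+1).
have val_a : (a : nat) = (r + j)%N by rewrite /a inordK //; lia.
have val_b : (b : nat) = (r + j.+1)%N by rewrite /b inordK //; lia.
have aW : a \in holey_window r j.+1 by rewrite inE val_a; lia.
have bW : b \notin holey_window r j.+1 by rewrite inE val_b; lia.
rewrite improving_swaps_cons aW bW.
have -> : swap (holey_window r j.+1) a b = holey_window r j.
  by apply/setP => x; rewrite !inE -!val_eqE /= val_a val_b; apply/idP/idP; lia.
rewrite IHj 1?ltnW //.
rewrite (Delta_unit_ballots (@card_block_ballots _ _ _) aW bW).
by rewrite !approvals_staircase val_a val_b addnS -natr1 addrAC subrr add0r thr_le1.
Qed.

Lemma window_walk_improving t r : (r + t + k <= m.+1)%N ->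
  improving_swaps A thr (holey_window r k) (window_walk r t).
Proof.
elim: t r => // t IHt r le_rtk /=.
rewrite hole_walk_cat //; last by lia.
have -> : holey_window r 0 = holey_window r.+1 k.
  by apply/setP => x; rewrite !inE; apply/idP/idP; lia.
by apply: IHt; lia.
Qed.

End SlidingWindow.

Lemma staircase_voters_bound k : ('C((k + k %/ 4).+1, 2) <= k ^ 2)%N.
Proof.
rewrite bin2 /= leq_half_double -mul2n.
by move: (k %/ 4)%N (k %% 4)%N (divn_eq k 4) => q d ->; nia.
Qed.

Theorem theorem2 :
  exists (p : {poly rat}) (c : rat), 0 < c /\
    forall k : nat, (1 <= k)%N ->
      exists (n m : nat) (A : 'I_n -> {set 'I_m}) (W0 : {set 'I_m})
             (s : seq ('I_m * 'I_m)),
        (0 < n)%N /\ (k <= m)%N /\ n%:R <= p.[k%:R] /\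
        #|W0| = k /\
        valid_swaps W0 s /\
        c * (k%:R) ^+ 2 <= (size s)%:R /\
        all_swaps_gain A (n%:R / (k%:R) ^+ 2) W0 s.
Proof.
exists 'X^2, 4%:R^-1; split => // k k_gt0.
set q := (k %/ 4)%N; set m := (k + q)%N.
have n_le : ('C(m.+1, 2) <= k ^ 2)%N := staircase_voters_bound k.
have thr_le1 : 'C(m.+1, 2)%:R / k%:R ^+ 2 <= 1 :> rat.
  by rewrite ler_pdivrMr ?exprn_gt0 ?ltr0n // mul1r -natrX ler_nat.
exists 'C(m.+1, 2), m.+1, (staircase m.+1), (holey_window m k 0 k),
  (window_walk m k 0 q.+1).
have /andP[valid gain] := @window_walk_improving m k _ thr_le1 q.+1 0 ltac:(lia).
have k_le4q : (k <= 4 * q.+1)%N by rewrite mulnC ltnW // ltn_ceil.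
split; first by rewrite bin_gt0; lia.
split; first by lia.
split; first by rewrite hornerXn -natrX ler_nat.
split.
  rewrite -[k in RHS]subn0 -(@card_interval m.+1) ?leqW ?leq_addr //.
  by apply: eq_card => x; rewrite !inE; apply/idP/idP; lia.
split=> //; split=> //.
have : (k ^ 2 <= 4 * (q.+1 * k))%N by nia.
by rewrite size_window_walk -natrX -(ler_nat rat) natrM => ?; lra.
Qed.
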